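(* Let $\ell\in\{2,3\}$ and let $G\subseteq\Delta_2(\mathbb{F}_\ell)$ be a subgroup with $\operatorname{pr}_i(G)=\operatorname{GL}_2(\mathbb{F}_\ell)$ for each $i\in\{1,2\}$. Then $G=\Delta_2(\mathbb{F}_\ell)$ if and only if there exists $(g_1,g_2)\in G$ with $(\dim_1g_1,\dim_1g_2)\in\{(0,1),(1,0),(1,2),(2,1)\}$ when $\ell=2$, respectively $(\dim_1g_1,\dim_1g_2)\in\{(1,2),(2,1)\}$ when $\ell=3$.
   Context: $\Delta_2(\mathbb{F}_\ell)=\{(g_1,g_2)\in\operatorname{GL}_2(\mathbb{F}_\ell)^2:\det g_1=\det g_2\}$; $\operatorname{pr}_i$ is the projection onto the $i$-th factor; for $g\in\operatorname{GL}_2(\mathbb{F}_\ell)$, $\dim_1g=\dim_{\mathbb{F}_\ell}\ker(g-I)$. *)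

From HB Require Import structures.
From mathcomp Require Import all_boot all_order all_algebra all_fingroup.
Set Implicit Arguments. Unset Strict Implicit. Unset Printing Implicit Defensive.
Import GRing.Theory.
Local Open Scope ring_scope.

Notation GL2 l := {'GL_2['F_l]}.

Definition Delta2 (l : nat) : {set (GL2 l * GL2 l)%type} :=
  [set g : (GL2 l * GL2 l)%type | \det (GLval g.1) == \det (GLval g.2)].

Definition dim1 (l : nat) (g : GL2 l) : nat :=
  \rank (kermx (GLval g - 1%:M)).

Definition pr1 (l : nat) (G : {set (GL2 l * GL2 l)%type}) : {set GL2 l} :=
  [set g.1 | g in G].
Definition pr2 (l : nat) (G : {set (GL2 l * GL2 l)%type}) : {set GL2 l} :=
  [set g.2 | g in G].

From HB Require Import structures.
From mathcomp Require Import all_boot all_order all_algebra all_fingroup.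
From mathcomp Require Import ring.
Set Implicit Arguments. Unset Strict Implicit. Unset Printing Implicit Defensive.
Import GRing.Theory.

(* 1. Matrices over any field, written with explicit entries (mx2): a
      transvection (det t = 1, det (t - 1) = 0, t <> 1) is conjugate to
      [[1,1],[0,1]], and a determinant-one matrix is a product of four
      elementary unipotent matrices.  Hence a subgroup of GL_2(F), F finite,
      that is closed under conjugation and contains one transvection
      contains SL_2(F).
   2. Goursat-style fibres: for G <= H x H, N1 = {a | (a, 1) in G} is a
      subgroup, normal if pr_1 G = H, and (a, b) in G as soon as (a', b) in G
      and a a'^-1 in N1.  So if G <= Delta projects onto both factors and
      (t, 1) or (1, t) lies in G for a transvection t, then G = Delta.
   3. dim_1 g = 2 iff g = 1, dim_1 g = 0 iff det (g - 1) <> 0; so for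
      det g = 1, dim_1 g = 1 iff g is a transvection.
   4. Over F_2, Cayley-Hamilton gives g^3 = 1 if dim_1 g = 0 and g^3 = g
      otherwise: cubing turns the pairs (0,1), (1,0) into (2,1), (1,2).
   The theorem follows: (u, 1) with u = [[1,1],[0,1]] witnesses (1,2), and
   each admissible pair yields (t, 1) or (1, t) in G with t a transvection. *)

Local Open Scope ring_scope.

Section Matrices2x2.
Variable R : comNzRingType.
Implicit Types a b c d : R.

Definition mx2 a b c d : 'M[R]_2 :=
  \matrix_(i, j) if i == 0 then (if j == 0 then a else b)
                 else (if j == 0 then c else d).

Lemma mx2_eta (M : 'M[R]_2) : M = mx2 (M 0 0) (M 0 1) (M 1 0) (M 1 1).
Proof.
apply/matrixP => i j; rewrite mxE.
by case: i => [[|[|//]] ?]; case: j => [[|[|//]] ?]; congr (M _ _); apply: val_inj.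
Qed.

Lemma mx2_inj a b c d a' b' c' d' :
  mx2 a b c d = mx2 a' b' c' d' -> [/\ a = a', b = b', c = c' & d = d'].
Proof.
move=> /matrixP E; have := E 0 0; have := E 0 1; have := E 1 0; have := E 1 1.
by rewrite !mxE.
Qed.

Lemma mul_mx2 a b c d a' b' c' d' :
  mx2 a b c d *m mx2 a' b' c' d'
  = mx2 (a * a' + b * c') (a * b' + b * d') (c * a' + d * c') (c * b' + d * d').
Proof.
apply/matrixP => i j; rewrite !mxE !big_ord_recl big_ord0 !mxE addr0.
by case: i => [[|[|//]] ?]; case: j => [[|[|//]] ?].
Qed.

Lemma add_mx2 a b c d a' b' c' d' :
  mx2 a b c d + mx2 a' b' c' d' = mx2 (a + a') (b + b') (c + c') (d + d').
Proof.
by apply/matrixP => i j; rewrite !mxE; case: i => [[|[|//]] ?]; case: j => [[|[|//]] ?].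
Qed.

Lemma opp_mx2 a b c d : - mx2 a b c d = mx2 (- a) (- b) (- c) (- d).
Proof.
by apply/matrixP => i j; rewrite !mxE; case: i => [[|[|//]] ?]; case: j => [[|[|//]] ?].
Qed.

Lemma scale_mx2 k a b c d : k *: mx2 a b c d = mx2 (k * a) (k * b) (k * c) (k * d).
Proof.
by apply/matrixP => i j; rewrite !mxE; case: i => [[|[|//]] ?]; case: j => [[|[|//]] ?].
Qed.

Lemma scalar_mx2 a : a%:M = mx2 a 0 0 a.
Proof.
by apply/matrixP => i j; rewrite !mxE; case: i => [[|[|//]] ?]; case: j => [[|[|//]] ?].
Qed.

Lemma det_mx2 a b c d : \det (mx2 a b c d) = a * d - b * c.
Proof.
rewrite (expand_det_row _ 0) !big_ord_recl big_ord0 /cofactor !det_mx11 !mxE /=.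
by rewrite addr0 expr0 expr1 !mul1r mulN1r mulrN.
Qed.

Lemma trace_mx2 a b c d : \tr (mx2 a b c d) = a + d.
Proof. by rewrite /mxtrace !big_ord_recl big_ord0 !mxE addr0. Qed.

Lemma mx2_cayley_hamilton (M : 'M[R]_2) : M *m M = \tr M *: M - (\det M)%:M.
Proof.
rewrite [M]mx2_eta trace_mx2 det_mx2 scalar_mx2 scale_mx2 opp_mx2 add_mx2 mul_mx2.
by congr mx2; ring.
Qed.

Lemma det_sub1_mx2 (M : 'M[R]_2) : \det (M - 1%:M) = \det M - \tr M + 1.
Proof.
rewrite [M]mx2_eta trace_mx2 !det_mx2 scalar_mx2 opp_mx2 add_mx2 det_mx2.
ring.
Qed.
End Matrices2x2.

Section Transvections.
Variable F : fieldType.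

Definition upper (x : F) : 'M[F]_2 := mx2 1 x 0 1.
Definition lower (x : F) : 'M[F]_2 := mx2 1 0 x 1.

Definition transvection (t : 'M[F]_2) : bool :=
  [&& \det t == 1, \det (t - 1%:M) == 0 & t != 1%:M].

(* Normal form: every transvection is conjugate to upper 1.  Writing
   t = 1 + N, N has trace and determinant 0, and a basis (N v, v) with
   N v <> 0 conjugates N to [[0,1],[0,0]]. *)
Lemma transvection_std (t : 'M[F]_2) : transvection t ->
  exists2 P, P \in unitmx & t *m P = P *m upper 1.
Proof.
rewrite /transvection => /and3P[/eqP dt /eqP dt1 nt1].
have [a [b [c [d Et]]]] : exists a b c d, t = mx2 (1 + a) b c (1 + d).
  by exists (t 0 0 - 1), (t 0 1), (t 1 0), (t 1 1 - 1); rewrite !subrKC -mx2_eta.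
move: dt dt1 nt1; rewrite Et scalar_mx2 opp_mx2 add_mx2 !det_mx2.
rewrite [1 + a]addrC [1 + d]addrC !addrK !subr0 => dt dN nt1.
have trN : d = - a.
  apply/eqP; rewrite -addr_eq0; apply/eqP.
  have <- : (a + 1) * (d + 1) - b * c - (a * d - b * c) - 1 = d + a by ring.
  by rewrite dt dN subr0 subrr.
subst d; have [c0 | cn0] := eqVneq c 0.
  subst c; have a0 : a = 0.
    by apply/eqP; rewrite -[a == 0]orbb -mulf_eq0 -oppr_eq0 -dN; apply/eqP; ring.
  subst a; have bn0 : b != 0 by apply: contraNneq nt1 => ->; rewrite oppr0 !add0r.
  exists (mx2 b 0 0 1); first by rewrite unitmxE det_mx2 unitfE mulr1 mul0r subr0.
  by rewrite /upper !mul_mx2; congr mx2; ring.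
have Eb : b = - (a * a) / c.
  by apply: (mulIf cn0); rewrite mulfVK // -[RHS]subr0 -dN; ring.
subst b; exists (mx2 a 1 c 0).
  by rewrite unitmxE det_mx2 unitfE mulr0 mul1r sub0r oppr_eq0.
by rewrite /upper !mul_mx2; congr mx2; field.
Qed.

Lemma SL2_elementary (M : 'M[F]_2) : \det M = 1 ->
  exists w x y z, M = lower w *m (upper x *m lower y *m upper z).
Proof.
rewrite [M]mx2_eta det_mx2.
set a := M 0 0; set b := M 0 1; set c := M 1 0; set d := M 1 1 => dM.
have [c0 | cn0] := eqVneq c 0.
  rewrite c0 mulr0 subr0 in dM.
  have an0 : a != 0 by apply: contra_eq_neq dM => ->; rewrite mul0r eq_sym oner_eq0.
  have Ed : d = a^-1 by apply: (mulfI an0); rewrite dM mulfV.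
  exists (-1), ((a - 1) / a), a, ((b + d - 1) / a).
  by rewrite /upper /lower !mul_mx2 c0 Ed; congr mx2; field.
have Eb : b = (a * d - 1) / c by rewrite -dM; field.
exists 0, ((a - 1) / c), c, ((d - 1) / c).
by rewrite /upper /lower !mul_mx2 Eb; congr mx2; field.
Qed.

Lemma upper_transvection x : x != 0 -> transvection (upper x).
Proof.
move=> xn0; rewrite /transvection /upper scalar_mx2 opp_mx2 add_mx2 !det_mx2.
rewrite !(mulr1, mulr0, subr0, subrr) !eqxx /=.
by apply: contra xn0 => /eqP/mx2_inj[_ -> _ _].
Qed.

Lemma lower_transvection x : x != 0 -> transvection (lower x).
Proof.
move=> xn0; rewrite /transvection /lower scalar_mx2 opp_mx2 add_mx2 !det_mx2.
rewrite !(mulr1, mul0r, subr0, subrr) !eqxx /=.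
by apply: contra xn0 => /eqP/mx2_inj[_ _ -> _].
Qed.

Lemma upper_unit (x : F) : upper x \in unitmx.
Proof. by rewrite unitmxE /upper det_mx2 mulr1 mulr0 subr0 unitr1. Qed.

Lemma lower_unit (x : F) : lower x \in unitmx.
Proof. by rewrite unitmxE /lower det_mx2 mulr1 mul0r subr0 unitr1. Qed.
End Transvections.

Lemma GLval_inj n (R : finComUnitRingType) : injective (@GLval n R).
Proof. exact: val_inj. Qed.

Section NormalSubgroupsOfGL2.
Variables (F : finFieldType) (K : {group {'GL_2[F]}}).
Hypothesis K_conj : forall a h, a \in K -> (a ^ h)%g \in K.

Lemma transvection_conj_upper (t : {'GL_2[F]}) : transvection (GLval t) ->
  exists p : {'GL_2[F]}, GLval (t ^ p)%g = upper 1.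
Proof.
case/transvection_std => P uP tP; exists (Sub P uP).
by rewrite GL_MxE GL_MxE GL_VxE SubK tP mulKmx.
Qed.

(* All transvections are conjugate in GL_2(F), so K contains all of them. *)
Lemma transvection_mem (t s : {'GL_2[F]}) : t \in K ->
  transvection (GLval t) -> transvection (GLval s) -> s \in K.
Proof.
move=> tK /transvection_conj_upper[p tp] /transvection_conj_upper[q sq].
have -> : s = (t ^ (p * q^-1))%g.
  by rewrite conjgM; apply: (canRL (conjgK q)); apply: GLval_inj; rewrite tp sq.
exact: K_conj.
Qed.

Definition upperGL x : {'GL_2[F]} := Sub (upper x) (upper_unit x).
Definition lowerGL x : {'GL_2[F]} := Sub (lower x) (lower_unit x).

Lemma elementary_mem (t : {'GL_2[F]}) x : t \in K -> transvection (GLval t) ->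
  upperGL x \in K /\ lowerGL x \in K.
Proof.
move=> tK tt; have [-> | xn0] := eqVneq x 0.
  have -> : upperGL 0 = 1%g by apply: GLval_inj; rewrite SubK /upper -scalar_mx2.
  have -> : lowerGL 0 = 1%g by apply: GLval_inj; rewrite SubK /lower -scalar_mx2.
  by rewrite group1.
by split; apply: transvection_mem tK tt _;
  rewrite SubK ?upper_transvection ?lower_transvection.
Qed.

Theorem SL2_sub_normal (t : {'GL_2[F]}) : t \in K -> transvection (GLval t) ->
  forall s : {'GL_2[F]}, \det (GLval s) = 1 -> s \in K.
Proof.
move=> tK tt s /SL2_elementary[w [x [y [z Es]]]].
have -> : s = (lowerGL w * (upperGL x * lowerGL y * upperGL z))%g.
  by apply: GLval_inj; rewrite !GL_MxE !SubK.
have uK u : upperGL u \in K by have [] := elementary_mem u tK tt.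
have lK u : lowerGL u \in K by have [] := elementary_mem u tK tt.
by rewrite !groupM ?uK ?lK.
Qed.
End NormalSubgroupsOfGL2.

Section Fibres.
Variables (gT : finGroupType) (G : {group (gT * gT)%type}).
Implicit Types a b c d : gT.

Lemma pairM a b c d : ((a, b) * (c, d) = (a * c, b * d))%g. Proof. by []. Qed.
Lemma pairJ a b c d : ((a, b) ^ (c, d) = (a ^ c, b ^ d))%g. Proof. by []. Qed.

Definition fibre1 : {set gT} := [set a | (a, 1%g) \in G].
Definition fibre2 : {set gT} := [set b | (1%g, b) \in G].

Lemma fibre1_group_set : group_set fibre1.
Proof.
apply/group_setP; split=> [|a b]; rewrite !inE ?group1 // => aG bG.
by rewrite -[1%g]mulg1 -pairM groupM.
Qed.
Canonical fibre1_group := group fibre1_group_set.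

Lemma fibre2_group_set : group_set fibre2.
Proof.
apply/group_setP; split=> [|a b]; rewrite !inE ?group1 // => aG bG.
by rewrite -[1%g]mulg1 -pairM groupM.
Qed.
Canonical fibre2_group := group fibre2_group_set.

Lemma fibre1J : (forall a, exists b, (a, b) \in G) ->
  forall a h, a \in fibre1 -> (a ^ h)%g \in fibre1.
Proof.
move=> surj a h; have [h2 hG] := surj h.
by rewrite !inE => aG; rewrite -(conj1g h2) -pairJ groupJ.
Qed.

Lemma fibre2J : (forall b, exists a, (a, b) \in G) ->
  forall b h, b \in fibre2 -> (b ^ h)%g \in fibre2.
Proof.
move=> surj b h; have [h1 hG] := surj h.
by rewrite !inE => bG; rewrite -(conj1g h1) -pairJ groupJ.
Qed.

Lemma fibre1_lift a a' b : (a', b) \in G -> (a * a'^-1)%g \in fibre1 -> (a, b) \in G.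
Proof.
by rewrite inE => abG aaG; have := groupM aaG abG; rewrite pairM mulgKV mul1g.
Qed.

Lemma fibre2_lift a b b' : (a, b') \in G -> (b * b'^-1)%g \in fibre2 -> (a, b) \in G.
Proof.
by rewrite inE => abG bbG; have := groupM bbG abG; rewrite pairM mulgKV mul1g.
Qed.
End Fibres.

(* Delta_2(F) over an arbitrary finite field F; Delta2 l is DeltaGL2 'F_l. *)
Definition DeltaGL2 (F : finFieldType) : {set {'GL_2[F]} * {'GL_2[F]}} :=
  [set g | \det (GLval g.1) == \det (GLval g.2)].

Section Delta.
Variables (F : finFieldType) (G : {group ({'GL_2[F]} * {'GL_2[F]})%type}).
Hypotheses (GD : G \subset DeltaGL2 F)
  (surj1 : forall a, exists b, (a, b) \in G) (surj2 : forall b, exists a, (a, b) \in G).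

Lemma DeltaGL2P (g : {'GL_2[F]} * {'GL_2[F]}) :
  reflect (\det (GLval g.1) = \det (GLval g.2)) (g \in DeltaGL2 F).
Proof. by rewrite inE; exact: eqP. Qed.

Lemma det_mulV_eq (a b : {'GL_2[F]}) : \det (GLval a) = \det (GLval b) ->
  \det (GLval (a * b^-1)%g) = 1.
Proof.
move=> Eab; rewrite GL_MxE GL_VxE det_mulmx det_inv Eab mulrV //.
by rewrite -unitmxE; exact: (GL_unit b).
Qed.

Lemma Delta2_fibre1 : (forall s : {'GL_2[F]}, \det (GLval s) = 1 -> s \in fibre1 G) ->
  G :=: DeltaGL2 F.
Proof.
move=> SL2K; apply/eqP; rewrite eqEsubset GD.
apply/subsetP => -[a b] /DeltaGL2P /= Dab.
have [a' abG] := surj2 b; have /DeltaGL2P Da'b := subsetP GD _ abG.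
exact/(fibre1_lift abG)/SL2K/det_mulV_eq/(etrans Dab (esym Da'b)).
Qed.

Lemma Delta2_fibre2 : (forall s : {'GL_2[F]}, \det (GLval s) = 1 -> s \in fibre2 G) ->
  G :=: DeltaGL2 F.
Proof.
move=> SL2K; apply/eqP; rewrite eqEsubset GD.
apply/subsetP => -[a b] /DeltaGL2P /= Dab.
have [b' abG] := surj1 a; have /DeltaGL2P Dab' := subsetP GD _ abG.
exact/(fibre2_lift abG)/SL2K/det_mulV_eq/(etrans (esym Dab) Dab').
Qed.

Lemma Delta2_of_transvection1 t : (t, 1%g) \in G -> transvection (GLval t) ->
  G :=: DeltaGL2 F.
Proof.
move=> tG tt; apply: Delta2_fibre1.
by apply: (SL2_sub_normal (fibre1J surj1) (t := t)); rewrite ?inE.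
Qed.

Lemma Delta2_of_transvection2 t : (1%g, t) \in G -> transvection (GLval t) ->
  G :=: DeltaGL2 F.
Proof.
move=> tG tt; apply: Delta2_fibre2.
by apply: (SL2_sub_normal (fibre2J surj2) (t := t)); rewrite ?inE.
Qed.
End Delta.

Section DimensionOfFixedSpace.
Variable l : nat.
Implicit Types g : GL2 l.

Lemma dim1E g : dim1 g = (2 - \rank (GLval g - 1%:M)%R)%N.
Proof. by rewrite /dim1 mxrank_ker. Qed.

Lemma dim1_eq2 g : (dim1 g == 2%N) = (g == 1%g).
Proof.
rewrite dim1E -(inj_eq (@GLval_inj 2 'F_l)) GL_1E -subr_eq0 -mxrank_eq0.
by have := rank_leq_row (GLval g - 1%:M); case: (\rank _) => [|[|[|]]].
Qed.

Lemma dim1_id : dim1 (1%g : GL2 l) = 2%N.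
Proof. by apply/eqP; rewrite dim1_eq2. Qed.

Lemma dim1_eq0 g : (dim1 g == 0%N) = (\det (GLval g - 1%:M) != 0).
Proof.
rewrite dim1E -unitfE -unitmxE -row_free_unit /row_free.
by have := rank_leq_row (GLval g - 1%:M); case: (\rank _) => [|[|[|]]].
Qed.

Lemma transvection_dim1 g : \det (GLval g) = 1 ->
  transvection (GLval g) = (dim1 g == 1%N).
Proof.
move=> dg; have E1 : (GLval g == 1%:M) = (g == 1%g).
  by rewrite -(inj_eq (@GLval_inj 2 'F_l)).
rewrite /transvection dg eqxx E1 -dim1_eq2 -[_ == 0]negbK -dim1_eq0 /=.
by have := leq_subr (\rank (GLval g - 1%:M)) 2; rewrite -dim1E; case: (dim1 g) => [|[|[|]]].
Qed.
End DimensionOfFixedSpace.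

Lemma F2_cases (x : 'F_2) : x = 0 \/ x = 1.
Proof. by case: x => [[|[|//]] ?]; [left | right]; apply: val_inj. Qed.

Lemma F2_oppmx m n (M : 'M['F_2]_(m, n)) : - M = M.
Proof.
by apply/matrixP => i j; rewrite mxE; case: (F2_cases (M i j)) => ->; apply: val_inj.
Qed.

Lemma GL2_F2_det (g : GL2 2) : \det (GLval g) = 1.
Proof. by have := GL_det g; case: (F2_cases (\det (GLval g))) => ->. Qed.

(* By Cayley-Hamilton, g^2 = tr(g) g + 1 in GL_2(F_2), and tr g = 0 exactly
   when g has a nonzero fixed vector. *)
Lemma GL2_F2_cube (g : GL2 2) : (g ^+ 3)%g = if dim1 g == 0%N then 1%g else g.
Proof.
have CH := mx2_cayley_hamilton (GLval g).
rewrite dim1_eq0 det_sub1_mx2 (GL2_F2_det g) in CH *; apply: GLval_inj.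
rewrite !expgS expg0 mulg1 !GL_MxE; move: CH.
case: (F2_cases (\tr (GLval g))) => -> CH.
  have -> : (1 - 0 + 1 : 'F_2) = 0 by apply: val_inj.
  by rewrite eqxx /= CH scale0r sub0r mulmxN mulmx1 F2_oppmx.
have -> : (1 - 1 + 1 : 'F_2) = 1 by apply: val_inj.
by rewrite oner_eq0 /= CH scale1r mulmxBr CH scale1r mulmx1 addrAC subrr add0r F2_oppmx.
Qed.

Lemma F2_cube_pair01 (g1 g2 : GL2 2) : dim1 g1 = 0%N -> dim1 g2 = 1%N ->
  ((g1, g2) ^+ 3)%g = (1%g, g2).
Proof.
by move=> d1 d2; rewrite -[LHS]/(g1 ^+ 3, g2 ^+ 3)%g !GL2_F2_cube d1 d2.
Qed.

Lemma F2_cube_pair10 (g1 g2 : GL2 2) : dim1 g1 = 1%N -> dim1 g2 = 0%N ->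
  ((g1, g2) ^+ 3)%g = (g1, 1%g).
Proof.
by move=> d1 d2; rewrite -[LHS]/(g1 ^+ 3, g2 ^+ 3)%g !GL2_F2_cube d1 d2.
Qed.
Section Lemma6p1.
Variables (l : nat) (G : {group (GL2 l * GL2 l)%type}).
Hypotheses (GD : G \subset Delta2 l)
  (Hpr1 : pr1 G = [set: GL2 l]) (Hpr2 : pr2 G = [set: GL2 l]).

Lemma Delta2P (g : GL2 l * GL2 l) :
  reflect (\det (GLval g.1) = \det (GLval g.2)) (g \in Delta2 l).
Proof. by rewrite inE; exact: eqP. Qed.

Lemma pr1_surj (a : {'GL_2[('F_l : finFieldType)]}) : exists b, (a, b) \in G.
Proof.
have /imsetP[[a' b] abG /= ->] : a \in pr1 G by rewrite Hpr1 inE.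
by exists b.
Qed.

Lemma pr2_surj (b : {'GL_2[('F_l : finFieldType)]}) : exists a, (a, b) \in G.
Proof.
have /imsetP[[a b'] abG /= ->] : b \in pr2 G by rewrite Hpr2 inE.
by exists a.
Qed.

(* A pair with fixed-space dimensions (1,2) or (2,1) is (t, 1) or (1, t)
   with t a transvection, since its entries have equal determinants. *)
Lemma Delta2_of_dims12 g1 g2 : (g1, g2) \in G -> dim1 g1 = 1%N -> dim1 g2 = 2%N ->
  G :=: Delta2 l.
Proof.
move=> gG d1 /eqP; rewrite dim1_eq2 => /eqP g2E; subst g2.
have tt : transvection (GLval g1).
  have /Delta2P dg1 := subsetP GD _ gG.
  by rewrite transvection_dim1 ?d1 // dg1 GL_1E det1.
exact: (@Delta2_of_transvection1 'F_l G GD pr1_surj pr2_surj g1 gG tt).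
Qed.

Lemma Delta2_of_dims21 g1 g2 : (g1, g2) \in G -> dim1 g1 = 2%N -> dim1 g2 = 1%N ->
  G :=: Delta2 l.
Proof.
move=> gG /eqP; rewrite dim1_eq2 => /eqP g1E d2; subst g1.
have tt : transvection (GLval g2).
  have /Delta2P dg2 := subsetP GD _ gG.
  by rewrite transvection_dim1 ?d2 // -dg2 GL_1E det1.
exact: (@Delta2_of_transvection2 'F_l G GD pr1_surj pr2_surj g2 gG tt).
Qed.
End Lemma6p1.

Theorem lemma6p1 (l : nat) (Hl : l = 2%N \/ l = 3%N)
  (G : {group (GL2 l * GL2 l)%type})
  (HGsub : G \subset Delta2 l)
  (Hpr1 : pr1 G = [set: GL2 l]) (Hpr2 : pr2 G = [set: GL2 l]) :
  G :=: Delta2 l <->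
  exists2 g, g \in G &
    (dim1 g.1, dim1 g.2) \in
      (if l == 2%N then [:: (0, 1); (1, 0); (1, 2); (2, 1)]
       else [:: (1, 2); (2, 1)])%N.
Proof.
have D12 := Delta2_of_dims12 HGsub Hpr1 Hpr2.
have D21 := Delta2_of_dims21 HGsub Hpr1 Hpr2.
split=> [GE | [[g1 g2] gG]].
  pose u : GL2 l := Sub (upper 1) (upper_unit 1).
  have du : \det (GLval u) = 1 by rewrite SubK det_mx2 !mulr1 mulr0 subr0.
  have d1u : dim1 u = 1%N.
    by apply/eqP; rewrite -transvection_dim1 // SubK upper_transvection ?oner_neq0.
  exists (u, 1%g); first by rewrite GE; apply/Delta2P; rewrite du GL_1E det1.
  by rewrite /= d1u dim1_id; case: ifP.
case: Hl => El; subst l; rewrite !inE /=.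
  case/or4P => /eqP[d1 d2]; [| | exact: D12 gG d1 d2 | exact: D21 gG d1 d2].
    by have := groupX 3 gG; rewrite F2_cube_pair01 // => /D21; apply; rewrite ?dim1_id.
  by have := groupX 3 gG; rewrite F2_cube_pair10 // => /D12; apply; rewrite ?dim1_id.
by case/orP => /eqP[d1 d2]; [exact: D12 gG d1 d2 | exact: D21 gG d1 d2].
Qed.
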